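(* Let $n \ge s \ge 4$ be integers, let $p$ be an odd prime and let $0 \le j < p$ be an integer. Let \[ F_p(x) = \sum_{k=0}^{s-1} \binom{n}{k+1} G_{k+1}\, p^k\, x^{s-1-k}. \] Then \[ |F_p(j)| \le 3\,(np/\pi)^{s+1}. \]
   Context: The Bernoulli numbers $B_k$ are defined by $\frac{t}{e^t-1} = \sum_{k\ge 0} \frac{B_k}{k!} t^k$, and the Genocchi numbers by $G_k = 2(1-2^k)B_k$. Here $0^0 = 1$. *)

From Stdlib Require Import Reals List Arith ZArith Znumtheory.
Open Scope R_scope.

(* Bernoulli numbers, convention t/(e^t-1) (so B_1 = -1/2), computed by the
   recurrence equivalent to the generating function:
     B_0 = 1,  sum_{k=0}^{m} C(m+1,k) B_k = 0  for m >= 1,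
   i.e. B_m = -1/(m+1) * sum_{k=0}^{m-1} C(m+1,k) B_k.
   bern_upto n = [B_0; ...; B_n]. *)
Fixpoint bern_upto (n : nat) : list R :=
  match n with
  | O => 1 :: nil
  | S m =>
      let l := bern_upto m in
      l ++ ((- / INR (S n)) * sum_f_R0 (fun k => C (S n) k * nth k l 0) m) :: nil
  end.

Definition bernoulli (n : nat) : R := nth n (bern_upto n) 0.

Definition genocchi (k : nat) : R := 2 * (1 - 2 ^ k) * bernoulli k.

(* F_p(x) = sum_{k=0}^{s-1} binom(n,k+1) G_{k+1} p^k x^{s-1-k}  (0^0 = 1). *)
Definition Fp (n s p : nat) (x : R) : R :=
  sum_f_R0 (fun k => C n (S k) * genocchi (S k) * INR p ^ k * x ^ (s - 1 - k)) (s - 1).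

From Stdlib Require Import Reals List Arith ZArith Znumtheory Lra Lia MVT.
Open Scope R_scope.
From mathcomp Require all_boot all_algebra Rstruct.

(* Writing g_k = G_k / k!, we have sum_k g_(k+1) t^k = 2/(e^t + 1)
   = 1 - tanh(t/2).  Since C(n,k+1) (k+1)! <= n^(k+1) and p^k j^(s-1-k) <= p^(s-1),
     |F_p(j)| <= p^(s-1) n (1 + sum_(k<s) |th_k| n^k),
   where th = tanh(t/2) = sum_k th_k t^k.  The series th satisfies the Riccati
   equation th' = (1 - th^2)/2, so |th| := sum_k |th_k| t^k satisfies
   |th|' <= (1 + |th|^2)/2 coefficientwise; comparing with tan(t/2) by the mean
   value theorem bounds every truncation T of |th| by T(x) <= tan(x/2) on
   [0, PI).  Taking x = PI - PI/(2m) and rescaling to x = n finishes the proof. *)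

(* Power series over R are represented by their coefficient sequences. *)
Definition conv (a b : nat -> R) (n : nat) : R :=
  sum_f_R0 (fun k => a k * b (n - k)%nat) n.

(* Associativity and commutativity of [conv] are inherited from the product
   of polynomials: the first [n+1] coefficients of a product only depend on
   the first [n+1] coefficients of the factors. *)
Module ConvAsPolyProduct.
Import all_boot all_algebra Rstruct.
Import GRing.Theory.
Local Open Scope ring_scope.

Lemma sum_f_R0_big (f : nat -> R) n : sum_f_R0 f n = (\sum_(i < n.+1) f i)%R.
Proof.
elim: n => [|n IH]; first by rewrite big_ord_recr big_ord0 /= add0r.
by rewrite big_ord_recr /= -IH.
Qed.

Lemma conv_coef (a b : nat -> R) N k : (k < N)%N ->
  conv a b k = ((\poly_(i < N) a i) * (\poly_(i < N) b i))`_k.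
Proof.
move=> hk; rewrite coefM /conv sum_f_R0_big; apply: eq_bigr => j _.
have hj : (j < N)%N by apply: leq_ltn_trans hk; rewrite -ltnS.
have hkj : (k - j < N)%N by apply: leq_ltn_trans (leq_subr j k) hk.
by rewrite !coef_poly hj hkj.
Qed.

Lemma conv_assoc (a b c : nat -> R) n :
  conv (conv a b) c n = conv a (conv b c) n.
Proof.
set pa := \poly_(i < n.+1) a i; set pb := \poly_(i < n.+1) b i.
set pc := \poly_(i < n.+1) c i.
have -> : conv (conv a b) c n = ((pa * pb) * pc)`_n.
  rewrite coefM /conv sum_f_R0_big; apply: eq_bigr => j _.
  rewrite -/(conv a b j) (conv_coef a b n.+1 j (ltn_ord j)) coef_poly.
  by rewrite (leq_ltn_trans (leq_subr j n) (ltnSn n)).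
have -> : conv a (conv b c) n = (pa * (pb * pc))`_n.
  rewrite coefM /conv sum_f_R0_big; apply: eq_bigr => j _.
  have h : (n - j < n.+1)%N by rewrite ltnS leq_subr.
  by rewrite -/(conv b c (n - j)) (conv_coef b c n.+1 (n - j) h) coef_poly (ltn_ord j).
by rewrite mulrA.
Qed.

Lemma conv_comm (a b : nat -> R) n : conv a b n = conv b a n.
Proof. by rewrite (conv_coef a b n.+1 n (ltnSn n)) (conv_coef b a n.+1 n (ltnSn n)) mulrC. Qed.
End ConvAsPolyProduct.

Notation conv_assoc := ConvAsPolyProduct.conv_assoc.
Notation conv_comm := ConvAsPolyProduct.conv_comm.

Definition one (n : nat) : R := match n with O => 1 | _ => 0 end.
Definition mul_t (a : nat -> R) (n : nat) : R :=
  match n with O => 0 | S m => a m end.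
Definition tvar : nat -> R := mul_t one.
Definition euler (a : nat -> R) (n : nat) : R := INR n * a n.            (* t a' *)
Definition dil2 (a : nat -> R) (n : nat) : R := 2 ^ n * a n.              (* a(2t) *)
Definition expc (n : nat) : R := / INR (fact n).
Definition expm1c (n : nat) : R := expc n - one n.
Definition expp1c (n : nat) : R := expc n + one n.

Lemma conv_ext a a' b b' n : (forall k, a k = a' k) -> (forall k, b k = b' k) ->
  conv a b n = conv a' b' n.
Proof. intros Ha Hb; unfold conv; apply sum_eq; intros; rewrite Ha, Hb; auto. Qed.

Lemma conv_plus_l a b c n : conv (fun k => a k + b k) c n = conv a c n + conv b c n.
Proof. unfold conv; rewrite <- sum_plus; apply sum_eq; intros; ring. Qed.

Lemma conv_scal_l r a c n : conv (fun k => r * a k) c n = r * conv a c n.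
Proof. unfold conv; rewrite scal_sum; apply sum_eq; intros; ring. Qed.

Lemma conv_sub_l a b c n : conv (fun k => a k - b k) c n = conv a c n - conv b c n.
Proof.
rewrite (conv_ext _ (fun k => a k + -1 * b k) c c) by (intros; ring).
rewrite conv_plus_l, conv_scal_l; ring.
Qed.

Lemma conv_plus_r a b c n : conv c (fun k => a k + b k) n = conv c a n + conv c b n.
Proof. rewrite !(conv_comm c); apply conv_plus_l. Qed.
Lemma conv_scal_r r a c n : conv c (fun k => r * a k) n = r * conv c a n.
Proof. rewrite !(conv_comm c); apply conv_scal_l. Qed.
Lemma conv_sub_r a b c n : conv c (fun k => a k - b k) n = conv c a n - conv c b n.
Proof. rewrite !(conv_comm c); apply conv_sub_l. Qed.

Lemma conv_one_r a n : conv a one n = a n.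
Proof.
unfold conv. destruct n as [|n]; [simpl; ring|].
rewrite tech5, Nat.sub_diag, (sum_eq _ (fun _ => 0)).
- rewrite sum_cte; simpl; ring.
- intros i hi. replace (S n - i)%nat with (S (n - i)) by lia. simpl; ring.
Qed.
Lemma conv_one_l a n : conv one a n = a n.
Proof. rewrite conv_comm; apply conv_one_r. Qed.

Lemma conv_mul_t_l a b n : conv (mul_t a) b n = mul_t (conv a b) n.
Proof.
unfold conv. destruct n as [|n]; [simpl; ring|].
rewrite decomp_sum by lia. simpl. rewrite Rmult_0_l, Rplus_0_l. reflexivity.
Qed.
Lemma conv_mul_t_r a b n : conv b (mul_t a) n = mul_t (conv b a) n.
Proof.
rewrite conv_comm, conv_mul_t_l. destruct n; simpl; auto. apply conv_comm.
Qed.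

Lemma euler_conv a b n : euler (conv a b) n = conv (euler a) b n + conv a (euler b) n.
Proof.
unfold euler, conv. rewrite <- sum_plus, scal_sum. apply sum_eq. intros i hi.
rewrite minus_INR by lia. ring.
Qed.

Lemma dil2_conv a b n : dil2 (conv a b) n = conv (dil2 a) (dil2 b) n.
Proof.
unfold dil2, conv. rewrite scal_sum. apply sum_eq. intros i hi.
replace (2 ^ n) with (2 ^ i * 2 ^ (n - i)) by (rewrite <- pow_add; f_equal; lia).
ring.
Qed.

Lemma conv_expc_expc n : conv expc expc n = dil2 expc n.
Proof.
unfold conv, dil2, expc.
assert (Hbin := Binomial.binomial 1 1 n).
replace (1 + 1) with 2 in Hbin by ring.
rewrite Hbin, Rmult_comm, scal_sum. symmetry. apply sum_eq. intros i hi.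
unfold C. rewrite !pow1.
assert (INR (fact i) <> 0) by apply INR_fact_neq_0.
assert (INR (fact (n-i)) <> 0) by apply INR_fact_neq_0.
assert (INR (fact n) <> 0) by apply INR_fact_neq_0.
field; auto.
Qed.

Lemma expm1c_mul_expp1c n : conv expm1c expp1c n = dil2 expm1c n.
Proof.
unfold expm1c, expp1c.
rewrite conv_sub_l, !conv_plus_r, conv_expc_expc, !conv_one_r, conv_one_l.
unfold dil2. destruct n; simpl; ring.
Qed.

(* e^t - 1 has valuation exactly 1, so multiplication by it is injective. *)
Lemma expm1c_cancel h : (forall n, conv h expm1c n = 0) -> forall n, h n = 0.
Proof.
intros H.
assert (Hle : forall n k, (k <= n)%nat -> h k = 0).
{ induction n; intros k hk.
  - replace k with 0%nat by lia. specialize (H 1%nat).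
    unfold conv, expm1c, expc in H. simpl in H. rewrite Rinv_1 in H. lra.
  - destruct (Nat.eq_dec k (S n)) as [->|hne]; [|apply IHn; lia].
    specialize (H (S (S n))). unfold conv in H. rewrite tech5, tech5 in H.
    rewrite (sum_eq _ (fun _ => 0)) in H by (intros i hi; rewrite (IHn i hi); ring).
    rewrite sum_cte, Nat.sub_diag in H.
    replace (S (S n) - S n)%nat with 1%nat in H by lia.
    unfold expm1c, expc in H. simpl in H. rewrite Rinv_1 in H. lra. }
intros n; apply (Hle n n); lia.
Qed.

Lemma bern_upto_length n : length (bern_upto n) = S n.
Proof. induction n; [reflexivity|]. simpl. rewrite length_app, IHn. simpl. lia. Qed.

Lemma bern_upto_nth n k : (k <= n)%nat -> nth k (bern_upto n) 0 = bernoulli k.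
Proof.
induction n; intros hk.
- replace k with 0%nat by lia. reflexivity.
- destruct (Nat.eq_dec k (S n)) as [->|hne]; [reflexivity|].
  simpl. rewrite app_nth1 by (rewrite bern_upto_length; lia). apply IHn; lia.
Qed.

Lemma bernoulli_rec m : bernoulli (S m) =
  - / INR (S (S m)) * sum_f_R0 (fun k => C (S (S m)) k * bernoulli k) m.
Proof.
unfold bernoulli at 1. simpl bern_upto.
rewrite app_nth2; rewrite bern_upto_length; [|lia].
rewrite Nat.sub_diag. simpl nth. f_equal. apply sum_eq. intros i hi.
rewrite bern_upto_nth; auto.
Qed.

Definition bern_egf (k : nat) : R := bernoulli k / INR (fact k).

(* The recurrence says exactly that  bern_egf * (e^t - 1) = t. *)
Lemma bern_egf_mul_expm1c n : conv bern_egf expm1c n = tvar n.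
Proof.
destruct n as [|[|m]].
- unfold conv, expm1c, expc; simpl. rewrite Rinv_1; ring.
- unfold conv, expm1c, expc, bern_egf; simpl. unfold bernoulli; simpl.
  unfold Rdiv. rewrite !Rinv_1. ring.
- assert (Hsum : sum_f_R0 (fun k => C (S (S m)) k * bernoulli k) (S m) = 0).
  { rewrite tech5, bernoulli_rec.
    assert (HC : C (S (S m)) (S m) = INR (S (S m))).
    { unfold C. replace (S (S m) - S m)%nat with 1%nat by lia.
      rewrite fact_simpl, mult_INR. simpl (fact 1).
      assert (INR (fact (S m)) <> 0) by apply INR_fact_neq_0.
      change (INR 1) with 1. field; auto. }
    rewrite HC. field. apply not_0_INR. lia. }
  unfold conv. rewrite tech5, Nat.sub_diag.
  replace (expm1c 0) with 0 by (unfold expm1c, expc; simpl; rewrite Rinv_1; ring).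
  rewrite (sum_eq _ (fun k => C (S (S m)) k * bernoulli k * / INR (fact (S (S m))))).
  + rewrite <- scal_sum, Hsum. simpl. ring.
  + intros i hi. unfold bern_egf, expm1c, expc, C.
    replace (one (S (S m) - i)) with 0
      by (replace (S (S m) - i)%nat with (S (S m - i)) by lia; reflexivity).
    assert (INR (fact i) <> 0) by apply INR_fact_neq_0.
    assert (INR (fact (S (S m) - i)) <> 0) by apply INR_fact_neq_0.
    assert (INR (fact (S (S m))) <> 0) by apply INR_fact_neq_0.
    field; auto.
Qed.

Definition genocchi_egf (n : nat) : R := 2 * (1 - 2 ^ n) * bern_egf n.

Lemma genocchi_egf_fact k : genocchi k = genocchi_egf k * INR (fact k).
Proof.
unfold genocchi, genocchi_egf, bern_egf.
assert (INR (fact k) <> 0) by apply INR_fact_neq_0. field; auto.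
Qed.

Lemma dil2_tvar n : dil2 tvar n = 2 * tvar n.
Proof. unfold dil2, tvar. destruct n as [|[|n]]; simpl; ring. Qed.

(* Since genocchi_egf = 2 (t/(e^t-1) - 2t/(e^(2t)-1)), we get
   genocchi_egf (e^t + 1) = 2t; this is checked after multiplying by e^t - 1. *)
Lemma genocchi_egf_mul_expp1c n : conv genocchi_egf expp1c n = 2 * tvar n.
Proof.
assert (Hc : forall m, conv (fun k => conv genocchi_egf expp1c k - 2 * tvar k) expm1c m = 0).
{ intros m. rewrite conv_sub_l, conv_assoc, conv_scal_l.
  rewrite (conv_ext genocchi_egf (fun k => 2 * bern_egf k - 2 * dil2 bern_egf k)
             (conv expp1c expm1c) (dil2 expm1c));
    [| intros; unfold genocchi_egf, dil2; ring
     | intros; rewrite conv_comm; apply expm1c_mul_expp1c].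
  rewrite conv_sub_l, !conv_scal_l, <- dil2_conv.
  replace (dil2 (conv bern_egf expm1c) m) with (2 * tvar m)
    by (rewrite <- dil2_tvar; unfold dil2; rewrite bern_egf_mul_expm1c; reflexivity).
  rewrite (conv_ext bern_egf bern_egf (dil2 expm1c) (conv expm1c expp1c));
    [| reflexivity | intros; symmetry; apply expm1c_mul_expp1c].
  rewrite <- conv_assoc, (conv_ext _ tvar expp1c expp1c);
    [| apply bern_egf_mul_expm1c | reflexivity].
  assert (E : conv tvar expp1c m - conv tvar expm1c m = 2 * tvar m).
  { rewrite <- conv_sub_r, (conv_ext tvar tvar _ (fun k => 2 * one k));
      [| reflexivity | intros; unfold expp1c, expm1c; ring].
    rewrite conv_scal_r, conv_one_r. reflexivity. }
  lra. }
apply Rminus_diag_uniq, (expm1c_cancel _ Hc n).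
Qed.

(* [nu] is the series 2/(e^t + 1) = genocchi_egf / t. *)
Definition nu (n : nat) : R := genocchi_egf (S n).

Lemma genocchi_egf_mul_t k : genocchi_egf k = mul_t nu k.
Proof. destruct k; [unfold genocchi_egf; simpl; ring | reflexivity]. Qed.

Lemma nu_mul_expp1c n : conv nu expp1c n = 2 * one n.
Proof.
assert (H := genocchi_egf_mul_expp1c (S n)).
rewrite (conv_ext _ (mul_t nu) expp1c expp1c), conv_mul_t_l in H;
  [exact H | apply genocchi_egf_mul_t | reflexivity].
Qed.

Lemma euler_expp1c k : euler expp1c k = mul_t expc k.
Proof.
destruct k as [|k]; [unfold euler; simpl; ring|].
unfold euler, expp1c, expc. simpl mul_t. simpl one.
rewrite fact_simpl, mult_INR.
assert (INR (fact k) <> 0) by apply INR_fact_neq_0.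
assert (INR (S k) <> 0) by (apply not_0_INR; lia).
field; auto.
Qed.

(* Differentiating nu (e^t + 1) = 2 gives the Riccati equation
   2 t nu' + t (2 nu - nu^2) = 0. *)
Lemma nu_riccati n : 2 * euler nu n + mul_t (fun k => 2 * nu k - conv nu nu k) n = 0.
Proof.
assert (E1 : forall m, conv (euler nu) expp1c m + mul_t (fun k => 2 * one k - nu k) m = 0).
{ intros m.
  assert (H : euler (conv nu expp1c) m = 0)
    by (unfold euler; rewrite nu_mul_expp1c; destruct m; simpl; ring).
  rewrite euler_conv, (conv_ext nu nu _ (mul_t expc)), conv_mul_t_r in H;
    [| reflexivity | apply euler_expp1c].
  rewrite <- H. f_equal. destruct m; simpl; auto.
  rewrite (conv_ext nu nu expc (fun k => expp1c k - one k));
    [| reflexivity | intros; unfold expp1c; ring].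
  rewrite conv_sub_r, nu_mul_expp1c, conv_one_r. reflexivity. }
assert (E2 : conv (fun k => conv (euler nu) expp1c k
                            + mul_t (fun k => 2 * one k - nu k) k) nu n = 0).
{ rewrite (conv_ext _ (fun _ => 0) nu nu); [| apply E1 | reflexivity].
  unfold conv. rewrite (sum_eq _ (fun _ => 0)) by (intros; ring).
  rewrite sum_cte; ring. }
rewrite conv_plus_l, conv_assoc, conv_mul_t_l in E2.
rewrite (conv_ext (euler nu) (euler nu) _ (fun k => 2 * one k)) in E2;
  [| reflexivity | intros; rewrite conv_comm; apply nu_mul_expp1c].
rewrite conv_scal_r, conv_one_r in E2.
rewrite <- E2. f_equal. destruct n; simpl; auto.
rewrite conv_sub_l, conv_scal_l, conv_one_l. reflexivity.
Qed.

(* [th] is the series 1 - 2/(e^t + 1) = tanh(t/2); it satisfies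
   t th' = (t - t th^2)/2, i.e. th' = (1 - th^2)/2. *)
Definition th (n : nat) : R := one n - nu n.

Lemma th_0 : th 0 = 0.
Proof.
assert (H := nu_mul_expp1c 0). unfold conv, expp1c, expc in H. simpl in H.
rewrite Rinv_1 in H. unfold th. simpl. lra.
Qed.

Lemma th_riccati n : INR n * th n = / 2 * (tvar n - mul_t (conv th th) n).
Proof.
assert (H := nu_riccati n). unfold euler in H. unfold th, tvar.
destruct n as [|n]; [simpl; ring|].
simpl in H |- *.
assert (E : conv (fun k => one k - nu k) (fun k => one k - nu k) n =
            one n - 2 * nu n + conv nu nu n)
  by (rewrite conv_sub_l, !conv_sub_r, !conv_one_l, !conv_one_r; ring).
rewrite E. destruct n; simpl in *; lra.
Qed.

Lemma sum_one_pow K x : sum_f_R0 (fun m => one m * x ^ m) K = 1.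
Proof. induction K; simpl; [ring|]. rewrite IHK; ring. Qed.

Lemma atan_le_id y : 0 <= y -> atan y <= y.
Proof.
intros hy. destruct (Req_dec y 0) as [->|hne]; [rewrite atan_0; lra|].
destruct (MVT_cor2 (atan - id)%F (fun t => / (1 + t ^ 2) - 1) 0 y) as [z [Hz Hz2]];
  [lra | intros t _; apply derivable_pt_lim_minus;
         [apply derivable_pt_lim_atan | apply derivable_pt_lim_id] |].
unfold minus_fct, id in Hz. rewrite atan_0 in Hz.
assert (/ (1 + z ^ 2) <= 1).
{ rewrite <- Rinv_1. apply Rinv_le_contravar; [lra|].
  assert (0 <= z ^ 2) by apply pow2_ge_0. lra. }
nra.
Qed.

Section RiccatiMajorant.
(* A nonnegative series [c] with c_0 = 0 satisfying the differential
   inequality  c' <= (1 + c^2)/2  coefficientwise is dominated by the solution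
   tan(t/2) of the equation; we prove this for its truncations [trunc K],
   in the form  atan (trunc K x) <= x/2. *)
Variable c : nat -> R.
Hypothesis c_0 : c 0%nat = 0.
Hypothesis c_nonneg : forall n, 0 <= c n.
Hypothesis c_riccati : forall m, INR (S m) * c (S m) <= / 2 * (one m + conv c c m).

Definition trunc (K : nat) (x : R) : R := sum_f_R0 (fun n => c n * x ^ n) K.
Definition trunc_deriv (K : nat) (x : R) : R :=
  sum_f_R0 (fun n => c n * (INR n * x ^ pred n)) K.

Lemma trunc_has_deriv K x : derivable_pt_lim (trunc K) x (trunc_deriv K x).
Proof.
induction K.
- unfold trunc, trunc_deriv. simpl.
  replace (c 0%nat * (0 * 1)) with 0 by ring.
  apply (derivable_pt_lim_const (c 0%nat * 1)).
- change (trunc (S K)) with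
    (plus_fct (trunc K) (mult_real_fct (c (S K)) (fun y => y ^ S K))).
  apply derivable_pt_lim_plus; [exact IHK|].
  apply derivable_pt_lim_scal, derivable_pt_lim_pow.
Qed.

Lemma trunc_nonneg K x : 0 <= x -> 0 <= trunc K x.
Proof.
intros hx. apply cond_pos_sum. intros n.
apply Rmult_le_pos; auto. apply pow_le; auto.
Qed.

Lemma trunc_0 K : trunc K 0 = 0.
Proof. unfold trunc. induction K; simpl; [rewrite c_0 | rewrite IHK]; ring. Qed.

(* Truncating a square gives a subsum of the square of the truncation. *)
Lemma trunc_conv_le K x : 0 <= x ->
  sum_f_R0 (fun m => conv c c m * x ^ m) K <= trunc K x * trunc K x.
Proof.
intros hx. destruct K as [|K].
{ unfold conv, trunc. simpl. nra. }
unfold trunc. rewrite cauchy_finite by lia.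
assert (E : sum_f_R0 (fun m => conv c c m * x ^ m) (S K) =
   sum_f_R0 (fun k => sum_f_R0 (fun p => c p * x ^ p * (c (k - p)%nat * x ^ (k - p))) k) (S K)).
{ apply sum_eq. intros i hi. unfold conv. rewrite Rmult_comm, scal_sum. apply sum_eq.
  intros j hj. replace (x ^ i) with (x ^ j * x ^ (i - j)) by (rewrite <- pow_add; f_equal; lia).
  ring. }
rewrite E.
assert (0 <= sum_f_R0 (fun k => sum_f_R0 (fun l => c (S (l + k)) * x ^ S (l + k) *
    (c (S K - l)%nat * x ^ (S K - l))) (pred (S K - k))) (pred (S K))).
{ apply cond_pos_sum. intros k. apply cond_pos_sum. intros l.
  apply Rmult_le_pos; apply Rmult_le_pos; auto; apply pow_le; auto. }
lra.
Qed.

Lemma trunc_deriv_le K x : 0 <= x -> trunc_deriv K x <= / 2 * (1 + trunc K x ^ 2).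
Proof.
intros hx. destruct K as [|K].
{ unfold trunc_deriv, trunc. simpl. rewrite c_0. nra. }
unfold trunc_deriv. rewrite decomp_sum by lia. simpl pred.
rewrite c_0, Rmult_0_l, Rplus_0_l.
apply Rle_trans with (sum_f_R0 (fun m => / 2 * (one m + conv c c m) * x ^ m) K).
{ apply sum_Rle. intros m hm. simpl pred.
  rewrite <- Rmult_assoc, (Rmult_comm (c (S m))).
  apply Rmult_le_compat_r; [apply pow_le; auto | apply c_riccati]. }
rewrite (sum_eq _ (fun m => (one m * x ^ m + conv c c m * x ^ m) * / 2))
  by (intros; ring).
rewrite <- scal_sum, sum_plus, sum_one_pow.
assert (H1 := trunc_conv_le K x hx).
assert (H2 : trunc K x <= trunc (S K) x).
{ unfold trunc. simpl.
  assert (0 <= c (S K) * (x * x ^ K)) by (apply Rmult_le_pos; auto; apply (pow_le x (S K)); auto).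
  lra. }
assert (H3 := trunc_nonneg K x hx).
simpl. nra.
Qed.

(* Comparison with tan(t/2): (atan o trunc K)' <= 1/2 on [0, x]. *)
Lemma atan_trunc_le K x : 0 <= x -> atan (trunc K x) <= x / 2.
Proof.
intros hx. destruct (Req_dec x 0) as [->|hne]; [rewrite trunc_0, atan_0; lra|].
destruct (MVT_cor2 (comp atan (trunc K) - mult_real_fct (/ 2) id)%F
   (fun t => / (1 + trunc K t ^ 2) * trunc_deriv K t - / 2 * 1) 0 x)
  as [z [Hz Hz2]].
{ lra. }
{ intros t _. apply derivable_pt_lim_minus.
  - apply derivable_pt_lim_comp; [apply trunc_has_deriv | apply derivable_pt_lim_atan].
  - apply derivable_pt_lim_scal, derivable_pt_lim_id. }
unfold minus_fct, comp, mult_real_fct, id in Hz. rewrite trunc_0, atan_0 in Hz.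
assert (Hd := trunc_deriv_le K z (Rlt_le _ _ (proj1 Hz2))).
set (T := trunc K z) in *.
assert (hT : 0 < 1 + T ^ 2) by (assert (0 <= T ^ 2) by apply pow2_ge_0; lra).
assert (/ (1 + T ^ 2) * trunc_deriv K z <= / 2).
{ apply Rle_trans with (/ (1 + T ^ 2) * (/ 2 * (1 + T ^ 2))).
  - apply Rmult_le_compat_l; [left; apply Rinv_0_lt_compat; lra | exact Hd].
  - right. field. lra. }
nra.
Qed.

(* Near the pole of tan(t/2):  trunc K (PI - 2d) <= cot d <= 1/d. *)
Lemma trunc_le_inv K d : 0 < d < PI / 2 -> trunc K (PI - 2 * d) <= / d.
Proof.
intros hd.
assert (H := atan_trunc_le K (PI - 2 * d) ltac:(lra)).
set (T := trunc K (PI - 2 * d)) in *.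
destruct (Rle_dec T 0).
{ assert (0 < / d) by (apply Rinv_0_lt_compat; lra). lra. }
assert (hT : 0 < T) by lra.
assert (H1 := atan_inv T hT).
assert (H2 := atan_le_id (/ T) (Rlt_le _ _ (Rinv_0_lt_compat _ hT))).
rewrite <- (Rinv_inv T). apply Rinv_le_contravar; lra.
Qed.

Lemma trunc_scale K x y : 0 < x <= y -> trunc K y <= (y / x) ^ K * trunc K x.
Proof.
intros hxy. unfold trunc. rewrite scal_sum. apply sum_Rle. intros k hk.
assert (hq : 1 <= y / x).
{ apply (Rmult_le_reg_r x); [lra|]. unfold Rdiv. rewrite Rmult_assoc, Rinv_l; lra. }
replace (y ^ k) with ((y / x) ^ k * x ^ k)
  by (rewrite <- Rpow_mult_distr; f_equal; field; lra).
assert ((y / x) ^ k <= (y / x) ^ K) by (apply Rle_pow; auto).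
assert (0 <= c k * x ^ k) by (apply Rmult_le_pos; auto; apply pow_le; lra).
replace (c k * ((y / x) ^ k * x ^ k)) with (c k * x ^ k * (y / x) ^ k) by ring.
apply Rmult_le_compat_l; auto.
Qed.
End RiccatiMajorant.

Definition th_abs (n : nat) : R := Rabs (th n).

Lemma th_abs_0 : th_abs 0 = 0.
Proof. unfold th_abs; rewrite th_0; apply Rabs_R0. Qed.

Lemma th_abs_riccati m : INR (S m) * th_abs (S m) <= / 2 * (one m + conv th_abs th_abs m).
Proof.
unfold th_abs. rewrite <- (Rabs_pos_eq (INR (S m))) by apply pos_INR.
rewrite <- Rabs_mult, th_riccati, Rabs_mult, Rabs_pos_eq by lra.
apply Rmult_le_compat_l; [lra|]. change (tvar (S m)) with (one m). simpl mul_t.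
eapply Rle_trans; [apply Rabs_triang|].
rewrite Rabs_Ropp, (Rabs_pos_eq (one m)) by (destruct m; simpl; lra).
apply Rplus_le_compat_l. unfold conv. eapply Rle_trans; [apply Rsum_abs|].
apply sum_Rle. intros; rewrite Rabs_mult; lra.
Qed.

Lemma genocchi_egf_S_abs_le k : Rabs (genocchi_egf (S k)) <= one k + th_abs k.
Proof.
change (genocchi_egf (S k)) with (nu k).
replace (nu k) with (one k - th k) by (unfold th; ring).
eapply Rle_trans; [apply Rabs_triang|].
rewrite Rabs_Ropp, (Rabs_pos_eq (one k)) by (destruct k; simpl; lra).
unfold th_abs; lra.
Qed.

Lemma bernoulli_inequality e m : 0 <= e <= 1 -> 1 - INR m * e <= (1 - e) ^ m.
Proof.
intros he. induction m; [simpl; lra|].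
rewrite S_INR. simpl.
assert (0 <= (1 - e) ^ m) by (apply pow_le; lra).
assert (0 <= INR m) by apply pos_INR.
nra.
Qed.

(* Evaluating the bound atan (trunc m x) <= x/2 at x = PI - PI/(2m) and
   rescaling to N gives  sum_(k<=m) |th_k| N^k <= (8m/PI) (N/PI)^m. *)
Lemma trunc_th_abs_le m N : (1 <= m)%nat -> PI <= N ->
  trunc th_abs m N <= 8 * INR m * (N / PI) ^ m / PI.
Proof.
intros hm hN.
assert (hPI := PI_RGT_0).
assert (hmR : 1 <= INR m) by (apply (le_INR 1); lia).
set (e := / (2 * INR m)).
set (d := PI / (4 * INR m)).
assert (he : 0 <= e <= / 2).
{ unfold e. split; [left; apply Rinv_0_lt_compat; lra | apply Rinv_le_contravar; lra]. }
assert (hd : 0 < d < PI / 2).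
{ unfold d. split; [apply Rdiv_lt_0_compat; lra|].
  apply Rmult_lt_compat_l; [lra|]. apply Rinv_lt_contravar; lra. }
assert (hx : PI - 2 * d = PI * (1 - e)) by (unfold d, e; field; lra).
assert (hpow : 1 / 2 <= (1 - e) ^ m).
{ assert (Hb := bernoulli_inequality e m ltac:(lra)).
  replace (INR m * e) with (1 / 2) in Hb by (unfold e; field; lra). lra. }
assert (Hat := trunc_le_inv th_abs th_abs_0 (fun n => Rabs_pos _) th_abs_riccati m d hd).
assert (Hsc := trunc_scale th_abs (fun n => Rabs_pos _) m (PI - 2 * d) N ltac:(lra)).
assert (Hratio : (N / (PI - 2 * d)) ^ m <= 2 * (N / PI) ^ m).
{ rewrite hx. replace (N / (PI * (1 - e))) with (N / PI * / (1 - e)) by (field; lra).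
  rewrite Rpow_mult_distr, pow_inv.
  assert (0 < (N / PI) ^ m) by (apply pow_lt, Rdiv_lt_0_compat; lra).
  rewrite (Rmult_comm 2). apply Rmult_le_compat_l; [lra|].
  replace 2 with (/ (1 / 2)) by field. apply Rinv_le_contravar; lra. }
assert (hT0 := trunc_nonneg th_abs (fun n => Rabs_pos _) m (PI - 2 * d) ltac:(lra)).
replace (8 * INR m * (N / PI) ^ m / PI) with (2 * (N / PI) ^ m * / d)
  by (unfold d; field; lra).
eapply Rle_trans; [exact Hsc|].
apply Rmult_le_compat; auto. apply pow_le. left; apply Rdiv_lt_0_compat; lra.
Qed.

Lemma fact_le_fact_sub_pow n m : (m <= n)%nat ->
  INR (fact n) <= INR (fact (n - m)) * INR n ^ m.
Proof.
induction m; intros hm.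
- rewrite Nat.sub_0_r, pow_O. lra.
- assert (IH := IHm ltac:(lia)).
  replace (n - m)%nat with (S (n - S m)) in IH by lia.
  rewrite fact_simpl, mult_INR in IH.
  assert (INR (S (n - S m)) <= INR n) by (apply le_INR; lia).
  assert (0 <= INR (fact (n - S m))) by apply pos_INR.
  assert (0 <= INR n ^ m) by (apply pow_le; apply pos_INR).
  assert (INR (S (n - S m)) * (INR (fact (n - S m)) * INR n ^ m) <=
          INR n * (INR (fact (n - S m)) * INR n ^ m))
    by (apply Rmult_le_compat_r; nra).
  simpl pow. nra.
Qed.

Lemma binom_fact_le_pow n m : (m <= n)%nat -> 0 <= C n m /\ C n m * INR (fact m) <= INR n ^ m.
Proof.
intros hm. unfold C.
assert (h1 : 0 < INR (fact m)) by apply INR_fact_lt_0.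
assert (h2 : 0 < INR (fact (n - m))) by apply INR_fact_lt_0.
assert (h3 : 0 <= INR (fact n)) by apply pos_INR.
split; [apply Rmult_le_pos; auto; left; apply Rinv_0_lt_compat; nra|].
replace (INR (fact n) / (INR (fact m) * INR (fact (n - m))) * INR (fact m))
  with (INR (fact n) / INR (fact (n - m))) by (field; lra).
apply (Rmult_le_reg_r (INR (fact (n - m)))); auto.
unfold Rdiv. rewrite Rmult_assoc, Rinv_l by lra.
assert (H := fact_le_fact_sub_pow n m hm). lra.
Qed.

Lemma Fp_term_le n s p j k : (k < s)%nat -> (s <= n)%nat -> (j <= p)%nat ->
  Rabs (C n (S k) * genocchi (S k) * INR p ^ k * INR j ^ (s - 1 - k)) <=
  INR p ^ (s - 1) * INR n * (one k * INR n ^ k + th_abs k * INR n ^ k).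
Proof.
intros hk hs hj.
destruct (binom_fact_le_pow n (S k) ltac:(lia)) as [hC1 hC2].
rewrite genocchi_egf_fact, !Rabs_mult.
rewrite (Rabs_pos_eq (C n (S k))) by exact hC1.
rewrite (Rabs_pos_eq (INR (fact (S k)))) by apply pos_INR.
rewrite (Rabs_pos_eq (INR p ^ k)) by (apply pow_le, pos_INR).
rewrite (Rabs_pos_eq (INR j ^ (s - 1 - k))) by (apply pow_le, pos_INR).
assert (hpj : INR p ^ k * INR j ^ (s - 1 - k) <= INR p ^ (s - 1)).
{ replace (INR p ^ (s - 1)) with (INR p ^ k * INR p ^ (s - 1 - k))
    by (rewrite <- pow_add; f_equal; lia).
  apply Rmult_le_compat_l; [apply pow_le, pos_INR|].
  apply pow_incr. split; [apply pos_INR | apply le_INR; auto]. }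
assert (hg := genocchi_egf_S_abs_le k).
assert (0 <= Rabs (genocchi_egf (S k))) by apply Rabs_pos.
assert (0 <= INR p ^ k * INR j ^ (s - 1 - k))
  by (apply Rmult_le_pos; apply pow_le; apply pos_INR).
assert (0 <= C n (S k) * INR (fact (S k))) by (apply Rmult_le_pos; auto; apply pos_INR).
replace (C n (S k) * (Rabs (genocchi_egf (S k)) * INR (fact (S k))) * INR p ^ k
           * INR j ^ (s - 1 - k))
  with (C n (S k) * INR (fact (S k)) * Rabs (genocchi_egf (S k))
          * (INR p ^ k * INR j ^ (s - 1 - k))) by ring.
replace (INR p ^ (s - 1) * INR n * (one k * INR n ^ k + th_abs k * INR n ^ k))
  with (INR n ^ S k * (one k + th_abs k) * INR p ^ (s - 1)) by (simpl; ring).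
apply Rmult_le_compat; auto; [apply Rmult_le_pos; auto|].
apply Rmult_le_compat; auto.
Qed.

Lemma Fp_abs_le n s p j : (1 <= s <= n)%nat -> (j <= p)%nat ->
  Rabs (Fp n s p (INR j)) <= INR p ^ (s - 1) * INR n * (1 + trunc th_abs (s - 1) (INR n)).
Proof.
intros hs hj. unfold Fp.
eapply Rle_trans; [apply Rsum_abs|].
eapply Rle_trans.
{ apply (sum_Rle _ (fun k => INR p ^ (s - 1) * INR n
                             * (one k * INR n ^ k + th_abs k * INR n ^ k))).
  intros k hk. apply Fp_term_le; lia. }
right. rewrite <- (sum_one_pow (s - 1) (INR n)). unfold trunc.
rewrite <- sum_plus, scal_sum. apply sum_eq; intros; ring.
Qed.

Lemma PI_lt_3_2 : PI < 3.2.
Proof.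
destruct (Rlt_or_le PI 3.2) as [h|h]; auto. exfalso.
assert (H1 : 0 <= cos (16/10)) by (apply cos_ge_0; lra).
assert (H2 := COS (16/10) ltac:(lra) ltac:(lra)).
assert (H3 : cos_ub (16/10) < 0).
{ unfold cos_ub, cos_approx. cbv [sum_f_R0]. unfold cos_term.
  rewrite !INR_IZR_INZ.
  replace (Z.of_nat (fact (2 * 0))) with 1%Z by reflexivity.
  replace (Z.of_nat (fact (2 * 1))) with 2%Z by reflexivity.
  replace (Z.of_nat (fact (2 * 2))) with 24%Z by reflexivity.
  replace (Z.of_nat (fact (2 * 3))) with 720%Z by reflexivity.
  replace (Z.of_nat (fact (2 * 4))) with 40320%Z by (vm_compute; reflexivity).
  simpl pow. lra. }
lra.
Qed.

Lemma final_estimate m N P T : (3 <= m)%nat -> INR m + 1 <= N -> 3 <= P ->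
  T <= 8 * INR m * (N / PI) ^ m / PI ->
  P ^ m * N * (1 + T) <= 3 * (N * P / PI) ^ (m + 2).
Proof.
intros hm hN hP hT.
assert (hPI := PI_lt_3_2). assert (hPI0 := PI_RGT_0).
assert (hmR : 3 <= INR m) by (replace 3 with (INR 3) by (simpl; ring); apply le_INR; lia).
set (A := N / PI) in *. set (W := A ^ m) in *.
assert (hNA : N = PI * A) by (unfold A; field; lra).
assert (hA : INR m + 1 <= PI * A) by lra.
assert (hA1 : 1 <= A) by nra.
assert (hW1 : 1 <= W) by (apply pow_R1_Rle; auto).
replace ((N * P / PI) ^ (m + 2)) with (W * A ^ 2 * (P ^ m * P ^ 2)).
2: { replace (N * P / PI) with (A * P) by (unfold A; field; lra).
     rewrite Rpow_mult_distr, !pow_add. unfold W. ring. }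
assert (hPm : 0 < P ^ m) by (apply pow_lt; lra).
assert (K1 : N * (1 + T) <= PI * A + 8 * INR m * A * W).
{ rewrite hNA. assert (0 <= PI * A) by nra.
  apply Rle_trans with (PI * A * (1 + 8 * INR m * W / PI)).
  - apply Rmult_le_compat_l; lra.
  - right; field; lra. }
assert (K2 : 27 * A >= 8.4375 * (INR m + 1)) by nra.
assert (K3 : W * (27 * A - 8 * INR m) >= 8.4375) by nra.
assert (K4 : PI * A + 8 * INR m * A * W <= 27 * W * A ^ 2) by (simpl; nra).
assert (K5 : 27 * W * A ^ 2 <= 3 * (W * A ^ 2 * P ^ 2)).
{ assert (0 <= W * A ^ 2) by (apply Rmult_le_pos; [lra | apply pow2_ge_0]).
  assert (9 <= P ^ 2) by (simpl; nra). nra. }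
replace (P ^ m * N * (1 + T)) with (P ^ m * (N * (1 + T))) by ring.
replace (3 * (W * A ^ 2 * (P ^ m * P ^ 2))) with (P ^ m * (3 * (W * A ^ 2 * P ^ 2))) by ring.
apply Rmult_le_compat_l; lra.
Qed.

Theorem mainTheorem5 (n s p j : nat)
  (hs : (4 <= s)%nat) (hsn : (s <= n)%nat)
  (hp : prime (Z.of_nat p)) (hodd : Nat.Odd p)
  (hj : (j < p)%nat) :
  Rabs (Fp n s p (INR j)) <= 3 * (INR n * INR p / PI) ^ (s + 1).
Proof.
assert (hp3 : (3 <= p)%nat).
{ destruct hp as [hp1 _]. destruct hodd as [q hq]. lia. }
assert (hN : INR (s - 1) + 1 <= INR n)
  by (rewrite <- S_INR; apply le_INR; lia).
assert (hNpi : PI <= INR n)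
  by (assert (PI <= 4) by apply PI_4; assert (INR 4 <= INR n) by (apply le_INR; lia);
      simpl in *; lra).
replace (s + 1)%nat with ((s - 1) + 2)%nat by lia.
eapply Rle_trans; [apply Fp_abs_le; lia|].
apply final_estimate.
- lia.
- exact hN.
- replace 3 with (INR 3) by (simpl; ring). apply le_INR; lia.
- apply trunc_th_abs_le; [lia | exact hNpi].
Qed.
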